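(* In the Cucker–Smale setting below, for all $n\in\mathbb{N}_0$, $$d_V(t_{2n+1})\le\left(1-\int_{t_{2n}}^{t_{2n+1}}\phi(s)\,ds\right)d_V(t_{2n}),$$ where for $t\ge0$, $\tilde\psi_t:=\min\{\tilde\psi(r):r\in[0,\max_{s\in[0,t]}d_X(s)]\}$ and $\phi(t):=\min\left\{e^{-\tilde KT}\tilde\psi_t,\frac{e^{-\tilde KT}}{T}\right\}$.
   Context: Setting: $N\ge2$; $\tilde\psi:\mathbb{R}\to\mathbb{R}$ positive, bounded, continuous, with $\tilde K:=\|\tilde\psi\|_\infty$ and $\int_0^\infty\min_{r\in[0,x]}\tilde\psi(r)dx=+\infty$; $\{t_n\}_{n\in\mathbb{N}_0}$ increasing, nonnegative, $t_0=0$, $t_n\to\infty$, with $t_{2n+2}-t_{2n+1}<\frac{\ln2}{\tilde K}$ and $t_{2n+1}-t_{2n}>\frac1{\tilde K}$ for all $n$, and $\sum_{p\ge0}\ln\frac{e^{\tilde K(t_{2p+2}-t_{2p+1})}}{2-e^{\tilde K(t_{2p+2}-t_{2p+1})}}<\infty$. A number $T>\frac{\ln2}{\tilde K}$ is fixed such that $t_{2n+1}-t_{2n}\le T$ for all $n\in\mathbb{N}_0$. $\alpha(0)=1$, $\alpha=1$ on $(t_{2n},t_{2n+1})$, $\alpha=-1$ on $[t_{2n+1},t_{2n+2}]$. $\{(x_i,v_i)\}$ solves $x_i'=v_i$, $v_i'(t)=\frac1{N-1}\sum_{j\ne i}\alpha(t)\tilde\psi(|x_i(t)-x_j(t)|)(v_j(t)-v_i(t))$,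 $t>0$, with given initial data in $\mathbb{R}^d$ (continuous, $C^1$ on each $(t_n,t_{n+1})$). $d_X(t):=\max_{i,j}|x_i(t)-x_j(t)|$, $d_V(t):=\max_{i,j}|v_i(t)-v_j(t)|$. *)

From Stdlib Require Import Reals Lra Lia.
From Coquelicot Require Import Coquelicot.
Open Scope R_scope.

Fixpoint sumn (n : nat) (f : nat -> R) : R :=
  match n with O => 0 | S m => sumn m f + f m end.

(* max_{k < n} f k, with default 0 (used only for nonnegative quantities
   whose maximum is attained and >= 0) *)
Fixpoint fmax (n : nat) (f : nat -> R) : R :=
  match n with O => 0 | S m => Rmax (fmax m f) (f m) end.

(* Vectors of R^d are represented as functions nat -> R (coordinates k < d);
   Euclidean norm. *)
Definition vnorm (d : nat) (w : nat -> R) : R :=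
  sqrt (sumn d (fun k => (w k) ^ 2)).

(* Agents are indexed by i < N; z i t is the state of agent i at time t. *)
Definition diam (N d : nat) (z : nat -> R -> nat -> R) (t : R) : R :=
  fmax N (fun i => fmax N (fun j => vnorm d (fun k => z i t k - z j t k))).

Definition cont_nonneg (f : R -> R) : Prop :=
  forall t, 0 <= t -> forall eps, 0 < eps ->
    exists delta, 0 < delta /\
      forall s, 0 <= s -> Rabs (s - t) < delta -> Rabs (f s - f t) < eps.

(* max_{s in [0,t]} f s  (as a supremum; it is attained for continuous f) *)
Definition max_on_0 (f : R -> R) (t : R) : R :=
  real (Lub_Rbar (fun y => exists s, 0 <= s <= t /\ y = f s)).

(* min_{r in [0,a]} g r  (as an infimum; it is attained for continuous g) *)
Definition min_on_0 (g : R -> R) (a : R) : R :=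
  real (Glb_Rbar (fun y => exists r, 0 <= r <= a /\ y = g r)).

Definition supnorm (g : R -> R) : R :=
  real (Lub_Rbar (fun y => exists r, y = Rabs (g r))).

Definition psi_t (psi : R -> R) (N d : nat) (x : nat -> R -> nat -> R) (t : R) : R :=
  min_on_0 psi (max_on_0 (diam N d x) t).

Definition phi (psi : R -> R) (K T : R) (N d : nat) (x : nat -> R -> nat -> R) (t : R) : R :=
  Rmin (exp (- K * T) * psi_t psi N d x t) (exp (- K * T) / T).

(* On a cooperative phase [t0, t1] (alpha = 1) fix two agents i, j and project all
   velocities on u = v_i(t1) - v_j(t1). The spread P = max_k <u, v_k> - min_k <u, v_k>
   satisfies P' <= - psi_t P in the sense of upper right Dini derivatives: every
   coupling weight lies in [psi_t, K], because psi_t is the minimum of psi over all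
   distances met so far, and comparing the extremal agents gives the decay. As
   e^{KT} phi <= psi_t, the function P(t) exp (e^{KT} int_{t0}^t phi) does not increase;
   phi is Riemann integrable since it is nonincreasing. With c = e^{KT} >= 2 and
   c int phi <= c T e^{-KT} / T = 1 we get exp (- c int phi) <= 1 - int phi, and
   |u|^2 <= P(t1), P(t0) <= |u| d_V(t0) (Cauchy-Schwarz) give the claim for the pair. *)

From Stdlib Require Import Reals Lra Lia Classical.
From Coquelicot Require Import Coquelicot.
Open Scope R_scope.

(** * Finite sums, maxima and the Euclidean norm *)

Lemma sumn_ext n f g : (forall k, (k < n)%nat -> f k = g k) -> sumn n f = sumn n g.
Proof.
  induction n as [|n IH]; intros H; simpl; [reflexivity|].
  rewrite IH, H; auto with arith.
Qed.

Lemma sumn_le n f g : (forall k, (k < n)%nat -> f k <= g k) -> sumn n f <= sumn n g.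
Proof.
  induction n as [|n IH]; intros H; simpl; [lra|].
  apply Rplus_le_compat; [apply IH|apply H]; auto with arith.
Qed.

Lemma sumn_plus n f g : sumn n (fun k => f k + g k) = sumn n f + sumn n g.
Proof. induction n as [|n IH]; simpl; [lra|]. rewrite IH; ring. Qed.

Lemma sumn_scal n c f : sumn n (fun k => c * f k) = c * sumn n f.
Proof. induction n as [|n IH]; simpl; [lra|]. rewrite IH; ring. Qed.

Lemma sumn_opp n f : sumn n (fun k => - f k) = - sumn n f.
Proof. induction n as [|n IH]; simpl; [lra|]. rewrite IH; ring. Qed.

Lemma sumn_minus n f g : sumn n (fun k => f k - g k) = sumn n f - sumn n g.
Proof. unfold Rminus. rewrite sumn_plus, sumn_opp. reflexivity. Qed.

Lemma sumn_const n c : sumn n (fun _ => c) = INR n * c.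
Proof. induction n as [|n IH]; simpl sumn; [simpl; lra|]. rewrite IH, S_INR; ring. Qed.

Lemma sumn_swap n m (F : nat -> nat -> R) :
  sumn n (fun i => sumn m (fun j => F i j)) = sumn m (fun j => sumn n (fun i => F i j)).
Proof.
  induction n as [|n IH]; simpl.
  - rewrite sumn_const; ring.
  - rewrite IH, <- sumn_plus; reflexivity.
Qed.

Lemma sumn_skip n i f : (i < n)%nat ->
  sumn n (fun k => if Nat.eq_dec k i then 0 else f k) = sumn n f - f i.
Proof.
  induction n as [|n IH]; intros Hi; [lia|]. simpl.
  destruct (Nat.eq_dec n i) as [<-|Hni].
  - rewrite (sumn_ext _ _ f); [ring|].
    intros k Hk; destruct (Nat.eq_dec k n); [lia|reflexivity].
  - rewrite IH by lia; ring.
Qed.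

Lemma sumn_nonneg n f : (forall k, (k < n)%nat -> 0 <= f k) -> 0 <= sumn n f.
Proof. intros H. rewrite <- (Rmult_0_r (INR n)), <- sumn_const. apply sumn_le, H. Qed.

Lemma sumn_ge_term n f k : (forall l, (l < n)%nat -> 0 <= f l) -> (k < n)%nat -> f k <= sumn n f.
Proof.
  induction n as [|n IH]; intros H Hk; [lia|]. simpl.
  assert (0 <= f n) by auto with arith.
  destruct (Nat.eq_dec k n) as [->|Hkn].
  - assert (0 <= sumn n f) by (apply sumn_nonneg; auto). lra.
  - assert (f k <= sumn n f) by (apply IH; auto; lia). lra.
Qed.

Lemma fmax_ge n f k : (k < n)%nat -> f k <= fmax n f.
Proof.
  induction n as [|n IH]; intros Hk; [lia|]. simpl.
  destruct (Nat.eq_dec k n) as [->|Hkn]; [apply Rmax_r|].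
  eapply Rle_trans; [apply IH; lia|apply Rmax_l].
Qed.

Lemma fmax_nonneg n f : 0 <= fmax n f.
Proof. induction n; simpl; [lra|]. eapply Rle_trans; [eassumption|apply Rmax_l]. Qed.

Lemma fmax_le n f B : 0 <= B -> (forall k, (k < n)%nat -> f k <= B) -> fmax n f <= B.
Proof.
  induction n as [|n IH]; simpl; intros HB H; [assumption|].
  apply Rmax_lub; [apply IH|apply H]; auto with arith.
Qed.

(* Unlike [fmax], these range over the indices [0..n] and need no default value. *)
Fixpoint max_upto (n : nat) (f : nat -> R) : R :=
  match n with O => f O | S m => Rmax (max_upto m f) (f (S m)) end.

Definition min_upto (n : nat) (f : nat -> R) : R := - max_upto n (fun k => - f k).

Lemma max_upto_ge n f k : (k <= n)%nat -> f k <= max_upto n f.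
Proof.
  induction n as [|n IH]; intros Hk; simpl.
  - replace k with O by lia; lra.
  - destruct (Nat.eq_dec k (S n)) as [->|Hkn]; [apply Rmax_r|].
    eapply Rle_trans; [apply IH; lia|apply Rmax_l].
Qed.

Lemma max_upto_attained n f : exists k, (k <= n)%nat /\ max_upto n f = f k.
Proof.
  induction n as [|n [k [Hk E]]]; simpl; [exists O; auto|].
  unfold Rmax; destruct Rle_dec; [exists (S n)|exists k]; auto.
Qed.

Lemma min_upto_le n f k : (k <= n)%nat -> min_upto n f <= f k.
Proof.
  intros Hk. unfold min_upto.
  pose proof (max_upto_ge n (fun k => - f k) k Hk). simpl in *. lra.
Qed.

Lemma min_upto_attained n f : exists k, (k <= n)%nat /\ min_upto n f = f k.
Proof.
  destruct (max_upto_attained n (fun k => - f k)) as [k [Hk E]].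
  exists k; split; [assumption|]. unfold min_upto; rewrite E; ring.
Qed.

Lemma vnorm_sqr d w : vnorm d w * vnorm d w = sumn d (fun k => w k ^ 2).
Proof.
  apply sqrt_sqrt, sumn_nonneg. intros; apply pow2_ge_0.
Qed.

Lemma vnorm_eq0 d w k : vnorm d w = 0 -> (k < d)%nat -> w k = 0.
Proof.
  intros H0 Hk.
  assert (Hsq : w k ^ 2 <= vnorm d w * vnorm d w).
  { rewrite vnorm_sqr. apply (sumn_ge_term d (fun k => w k ^ 2)); auto.
    intros; apply pow2_ge_0. }
  rewrite H0 in Hsq. nra.
Qed.

Lemma dot_le_vnorm d a b : sumn d (fun k => a k * b k) <= vnorm d a * vnorm d b.
Proof.
  set (A := vnorm d a). set (B := vnorm d b).
  assert (HA : 0 <= A) by apply sqrt_pos. assert (HB : 0 <= B) by apply sqrt_pos.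
  destruct (Req_dec A 0) as [A0|A0].
  { rewrite (sumn_ext _ _ (fun _ => 0)), sumn_const by
      (intros k Hk; rewrite (vnorm_eq0 d a k A0 Hk); ring).
    rewrite A0; lra. }
  destruct (Req_dec B 0) as [B0|B0].
  { rewrite (sumn_ext _ _ (fun _ => 0)), sumn_const by
      (intros k Hk; rewrite (vnorm_eq0 d b k B0 Hk); ring).
    rewrite B0; lra. }
  assert (Hsum : 2 * (A * B) * sumn d (fun k => a k * b k)
                 <= B * B * (A * A) + A * A * (B * B)).
  { replace (B * B * (A * A) + A * A * (B * B))
      with (B * B * (vnorm d a * vnorm d a) + A * A * (vnorm d b * vnorm d b)) by reflexivity.
    rewrite !vnorm_sqr, <- !sumn_scal, <- sumn_plus.
    apply sumn_le. intros k _. pose proof (pow2_ge_0 (B * a k - A * b k)). nra. }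
  assert (0 < A * B) by (apply Rmult_lt_0_compat; lra).
  nra.
Qed.

(** * Continuity, Dini derivatives and exponential bounds *)

Lemma continuity_pt_eps f t : continuity_pt f t <->
  (forall eps, 0 < eps -> exists del, 0 < del /\
     forall y, Rabs (y - t) < del -> Rabs (f y - f t) < eps).
Proof.
  split.
  - intros H eps He. destruct (H eps He) as [del [Hd H2]]. exists del; split; [lra|].
    intros y Hy. destruct (Req_dec y t) as [->|Hn].
    + rewrite Rminus_eq_0, Rabs_R0; assumption.
    + apply (H2 y). split; [split; [exact I|auto]|exact Hy].
  - intros H eps He. destruct (H eps He) as [del [Hd H2]]. exists del; split; [lra|].
    intros y [_ Hy]. apply H2, Hy.
Qed.

Lemma continuity_pt_Rmax f g t : continuity_pt f t -> continuity_pt g t ->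
  continuity_pt (fun s => Rmax (f s) (g s)) t.
Proof.
  rewrite !continuity_pt_eps. intros Hf Hg eps He.
  destruct (Hf eps He) as [d1 [Hd1 H1]], (Hg eps He) as [d2 [Hd2 H2]].
  exists (Rmin d1 d2); split; [apply Rmin_glb_lt; assumption|].
  intros y Hy.
  specialize (H1 y (Rlt_le_trans _ _ _ Hy (Rmin_l _ _))).
  specialize (H2 y (Rlt_le_trans _ _ _ Hy (Rmin_r _ _))).
  revert H1 H2. unfold Rmax; repeat destruct Rle_dec; unfold Rabs; repeat destruct Rcase_abs; lra.
Qed.

Lemma continuity_pt_sumn n (F : nat -> R -> R) t :
  (forall k, (k < n)%nat -> continuity_pt (F k) t) ->
  continuity_pt (fun s => sumn n (fun k => F k s)) t.
Proof.
  induction n as [|n IH]; intros H; simpl.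
  - apply continuity_pt_const; intros ? ?; reflexivity.
  - apply (continuity_pt_plus (fun s => sumn n (fun k => F k s)) (F n));
      [apply IH; intros|apply H]; auto with arith.
Qed.

Lemma continuity_pt_fmax n (F : nat -> R -> R) t :
  (forall k, (k < n)%nat -> continuity_pt (F k) t) ->
  continuity_pt (fun s => fmax n (fun k => F k s)) t.
Proof.
  induction n as [|n IH]; intros H; simpl.
  - apply continuity_pt_const; intros ? ?; reflexivity.
  - apply (continuity_pt_Rmax (fun s => fmax n (fun k => F k s)) (F n));
      [apply IH; intros|apply H]; auto with arith.
Qed.

Lemma continuity_pt_max_upto n (F : nat -> R -> R) t :
  (forall k, (k <= n)%nat -> continuity_pt (F k) t) ->
  continuity_pt (fun s => max_upto n (fun k => F k s)) t.
Proof.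
  induction n as [|n IH]; intros H; simpl; [apply H; lia|].
  apply (continuity_pt_Rmax (fun s => max_upto n (fun k => F k s)) (F (S n)));
    [apply IH; intros k Hk|]; apply H; lia.
Qed.

Lemma continuity_pt_min_upto n (F : nat -> R -> R) t :
  (forall k, (k <= n)%nat -> continuity_pt (F k) t) ->
  continuity_pt (fun s => min_upto n (fun k => F k s)) t.
Proof.
  intros H. apply (continuity_pt_opp (fun s => max_upto n (fun k => - F k s))).
  apply (continuity_pt_max_upto n (fun k s => - F k s)).
  intros k Hk. apply continuity_pt_opp, H, Hk.
Qed.

Lemma continuity_pt_lipschitz f t L : (forall y, Rabs (f y - f t) <= L * Rabs (y - t)) ->
  continuity_pt f t.
Proof.
  intros H. apply continuity_pt_eps. intros eps He.
  pose proof (Rabs_pos L). pose proof (Rle_abs L).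
  exists (eps / (Rabs L + 1)). split; [apply Rdiv_lt_0_compat; lra|].
  intros y Hy. eapply Rle_lt_trans; [apply H|].
  pose proof (Rabs_pos (y - t)).
  apply (Rmult_lt_compat_l (Rabs L + 1)) in Hy; [|lra].
  replace ((Rabs L + 1) * (eps / (Rabs L + 1))) with eps in Hy by (field; lra).
  nra.
Qed.

Definition clamp (a b s : R) : R := Rmax a (Rmin b s).

Lemma clamp_in a b s : a <= b -> a <= clamp a b s <= b.
Proof.
  intros; unfold clamp. split; [apply Rmax_l|]. apply Rmax_lub; [lra|apply Rmin_l].
Qed.

Lemma clamp_id a b s : a <= s <= b -> clamp a b s = s.
Proof. intros; unfold clamp. rewrite Rmin_right, Rmax_right; lra. Qed.

Lemma clamp_lip a b s s' : a <= b -> Rabs (clamp a b s - clamp a b s') <= Rabs (s - s').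
Proof.
  intros Hab. unfold clamp, Rmax, Rmin.
  repeat destruct Rle_dec; unfold Rabs; repeat destruct Rcase_abs; lra.
Qed.

Lemma continuity_pt_clamp f a b t : cont_nonneg f -> 0 <= a -> a <= b ->
  continuity_pt (fun s => f (clamp a b s)) t.
Proof.
  intros Hf Ha Hab. apply continuity_pt_eps. intros eps He.
  destruct (clamp_in a b t Hab) as [Ht1 Ht2].
  destruct (Hf (clamp a b t) ltac:(lra) eps He) as [del [Hd H]].
  exists del; split; [assumption|]. intros y Hy.
  destruct (clamp_in a b y Hab). apply H; [lra|].
  eapply Rle_lt_trans; [apply clamp_lip, Hab|exact Hy].
Qed.

Lemma real_induction (a b : R) (S : R -> Prop) :
  a <= b -> S a ->
  (forall c, a <= c < b -> (forall r, a <= r <= c -> S r) ->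
     exists del, 0 < del /\ forall r, c < r < c + del -> S r) ->
  (forall c, a < c <= b -> (forall r, a <= r < c -> S r) -> S c) ->
  S b.
Proof.
  intros Hab Sa Hright Hleft.
  set (E := fun s => a <= s <= b /\ forall r, a <= r <= s -> S r).
  assert (Ea : E a) by (split; [lra|]; intros r Hr; replace r with a by lra; exact Sa).
  assert (Eb : bound E) by (exists b; intros s [Hs _]; lra).
  destruct (completeness E Eb (ex_intro _ a Ea)) as [c [Hub Hlub]].
  assert (Hac : a <= c) by (apply Hub, Ea).
  assert (Hcb : c <= b) by (apply Hlub; intros s [Hs _]; lra).
  assert (Sbelow : forall r, a <= r < c -> S r).
  { intros r Hr. apply NNPP; intro Hn. assert (c <= r); [|lra].
    apply Hlub. intros s [Hs Hs']. apply Rnot_lt_le; intro Hrs. apply Hn, Hs'; lra. }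
  assert (Sc : S c).
  { destruct (Req_dec c a) as [->|Hca]; [exact Sa|]. apply Hleft; [lra|exact Sbelow]. }
  assert (Supto : forall r, a <= r <= c -> S r).
  { intros r Hr. destruct (Req_dec r c) as [->|Hrc]; [exact Sc|]. apply Sbelow; lra. }
  destruct (Req_dec c b) as [<-|Hcb']; [exact Sc|].
  destruct (Hright c ltac:(lra) Supto) as [del [Hdel Hdel']].
  set (s := Rmin b (c + del / 2)).
  assert (Hs : c < s) by (apply Rmin_glb_lt; lra).
  assert (s <= c); [|lra].
  apply Hub. split; [split; [lra|apply Rmin_l]|].
  intros r Hr. destruct (Rle_or_lt r c); [apply Supto; lra|].
  apply Hdel'. split; [assumption|]. assert (s <= c + del / 2) by apply Rmin_r. lra.
Qed.

Lemma dini_noninc (F : R -> R) a b : a <= b ->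
  (forall t, a <= t <= b -> continuity_pt F t) ->
  (forall t, a < t < b -> forall eps, 0 < eps -> exists del, 0 < del /\
      forall h, 0 < h < del -> F (t + h) <= F t + eps * h) ->
  F b <= F a.
Proof.
  intros Hab Hcont Hdini.
  assert (Hslack : forall eps, 0 < eps -> F b <= F a + eps * (b - a) + eps).
  { intros eps He.
    apply (real_induction a b (fun r => F r <= F a + eps * (r - a) + eps)); [lra|lra|..].
    - intros c Hc Sc. destruct (Req_dec c a) as [->|Hca].
      + destruct (proj1 (continuity_pt_eps F a) (Hcont a ltac:(lra)) eps He)
          as [del [Hdel Hd]].
        exists del; split; [assumption|]. intros r Hr.
        assert (Hclose : Rabs (F r - F a) < eps) by (apply Hd; rewrite Rabs_right; lra).
        apply Rabs_def2 in Hclose. nra.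
      + destruct (Hdini c ltac:(lra) eps He) as [del [Hdel Hd]].
        exists del; split; [assumption|]. intros r Hr.
        specialize (Hd (r - c) ltac:(lra)). replace (c + (r - c)) with r in Hd by ring.
        specialize (Sc c ltac:(lra)). lra.
    - intros c Hc Sc. apply Rle_plus_epsilon. intros eta Heta.
      destruct (proj1 (continuity_pt_eps F c) (Hcont c ltac:(lra)) eta Heta)
        as [del [Hdel Hd]].
      set (r := Rmax a (c - del / 2)).
      assert (Hr : a <= r < c) by (split; [apply Rmax_l|apply Rmax_lub_lt; lra]).
      assert (c - del / 2 <= r) by apply Rmax_r.
      assert (Hclose : Rabs (F r - F c) < eta) by (apply Hd; rewrite Rabs_left; lra).
      apply Rabs_def2 in Hclose. specialize (Sc r Hr).
      assert (eps * (r - a) <= eps * (c - a)) by (apply Rmult_le_compat_l; lra).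
      lra. }
  apply Rle_plus_epsilon. intros eta Heta.
  specialize (Hslack (eta / (b - a + 1)) ltac:(apply Rdiv_lt_0_compat; lra)).
  assert (eta / (b - a + 1) * (b - a) + eta / (b - a + 1) = eta) by (field; lra).
  lra.
Qed.

Lemma derivable_pt_lim_sumn n (F : nat -> R -> R) (l : nat -> R) t :
  (forall k, (k < n)%nat -> derivable_pt_lim (F k) t (l k)) ->
  derivable_pt_lim (fun s => sumn n (fun k => F k s)) t (sumn n l).
Proof.
  induction n as [|n IH]; intros H; simpl.
  - apply (derivable_pt_lim_const 0).
  - apply (derivable_pt_lim_plus (fun s => sumn n (fun k => F k s)) (F n));
      [apply IH; intros|apply H]; auto with arith.
Qed.

Lemma derivable_pt_lim_right f t l : derivable_pt_lim f t l -> forall eps, 0 < eps ->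
  exists del, 0 < del /\ forall h, 0 < h < del -> Rabs (f (t + h) - f t - h * l) <= eps * h.
Proof.
  intros H eps He. destruct (H eps He) as [del Hdel]. exists del; split; [apply cond_pos|].
  intros h Hh. assert (Hh0 : h <> 0) by lra.
  specialize (Hdel h Hh0 ltac:(rewrite Rabs_right; lra)).
  replace (f (t + h) - f t - h * l) with (h * ((f (t + h) - f t) / h - l)) by (field; lra).
  rewrite Rabs_mult, Rabs_right, Rmult_comm by lra.
  apply Rmult_le_compat_r; lra.
Qed.

Lemma right_nbhd_forall_le (m : nat) (P : nat -> R -> Prop) :
  (forall i, (i <= m)%nat -> exists del, 0 < del /\ forall h, 0 < h < del -> P i h) ->
  exists del, 0 < del /\ forall i, (i <= m)%nat -> forall h, 0 < h < del -> P i h.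
Proof.
  induction m as [|m IH]; intros H.
  - destruct (H O (le_n 0)) as [del [Hdel Hd]]. exists del; split; [assumption|].
    intros i Hi; replace i with O by lia; exact Hd.
  - destruct IH as [d1 [Hd1 H1]]; [intros; apply H; lia|].
    destruct (H (S m) (le_n _)) as [d2 [Hd2 H2]].
    exists (Rmin d1 d2); split; [apply Rmin_glb_lt; assumption|].
    intros i Hi h Hh. pose proof (Rmin_l d1 d2). pose proof (Rmin_r d1 d2).
    destruct (Nat.eq_dec i (S m)) as [->|Him]; [apply H2|apply H1]; lia || lra.
Qed.

Lemma exp_le_compat x y : x <= y -> exp x <= exp y.
Proof. intros [Hlt|Heq]; [left; apply exp_increasing, Hlt|rewrite Heq; right; reflexivity]. Qed.

Lemma one_minus_mul_exp_le y : (1 - y) * exp y <= 1.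
Proof.
  pose proof (exp_ineq1_le (- y)) as Hexp. rewrite exp_Ropp in Hexp.
  pose proof (exp_pos y).
  apply Rle_trans with (/ exp y * exp y); [apply Rmult_le_compat_r; lra|].
  rewrite Rinv_l; lra.
Qed.

Lemma exp_neg_mul_le c y : 2 <= c -> 0 <= y -> c * y <= 1 -> exp (- (c * y)) <= 1 - y.
Proof.
  intros Hc Hy Hcy. set (z := c * y).
  assert (Hz : 0 <= z <= 1) by (split; [apply Rmult_le_pos|]; unfold z; lra).
  pose proof (exp_ineq1_le z) as Hexp. rewrite exp_Ropp.
  apply Rle_trans with (/ (1 + z)); [apply Rinv_le_contravar; lra|].
  apply Rle_trans with (1 - z / 2).
  - apply (Rmult_le_reg_l (1 + z)); [lra|]. rewrite Rinv_r by lra.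
    assert (0 <= z * (1 - z)) by (apply Rmult_le_pos; lra). nra.
  - assert (2 * y <= z) by (unfold z; apply Rmult_le_compat_r; lra). lra.
Qed.

(** * Riemann integrability of monotone functions *)

Lemma ex_RInt_clamp (f : R -> R) a b : a <= b ->
  ex_RInt (fun s => f (clamp a b s)) a b -> ex_RInt f a b.
Proof.
  intros Hab. apply ex_RInt_ext. intros s Hs.
  rewrite Rmin_left, Rmax_right in Hs by lra. rewrite clamp_id; lra.
Qed.

Lemma ex_RInt_uniform_limit (f : R -> R) (g : nat -> R -> R) a b : a <= b ->
  (forall n, ex_RInt (g n) a b) ->
  (forall n s, a <= s <= b -> Rabs (g n s - f s) <= / INR (S n)) ->
  ex_RInt f a b.
Proof.
  intros Hab Hg Hclose.
  (* [filterlim_RInt] needs uniform convergence on the whole line, hence the clamping *)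
  apply ex_RInt_clamp; [assumption|].
  set (ge := fun n s => g n (clamp a b s)).
  destruct (filterlim_RInt ge a b eventually eventually_filter
              (fun s => f (clamp a b s)) (fun n => RInt (ge n) a b)) as [If [_ HIf]].
  - intros n. apply RInt_correct.
    apply (ex_RInt_ext (g n)); [|apply Hg].
    intros s Hs. rewrite Rmin_left, Rmax_right in Hs by lra. unfold ge; rewrite clamp_id; lra.
  - intros P [eps HP].
    destruct (INR_archimed eps 1 (cond_pos eps)) as [N HN].
    exists N. intros n Hn. apply HP. intros s.
    change (Rabs (ge n s - f (clamp a b s)) < eps).
    eapply Rle_lt_trans; [apply Hclose, clamp_in, Hab|].
    apply le_INR in Hn. rewrite S_INR.
    pose proof (pos_INR N). pose proof (cond_pos eps).
    apply (Rmult_lt_reg_r (INR n + 1)); [lra|].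
    rewrite Rinv_l by lra. nra.
  - exists If; exact HIf.
Qed.

Lemma ex_RInt_noninc_indicator (h : R -> R) a b : a <= b ->
  (forall s, a <= s <= b -> h s = 0 \/ h s = 1) ->
  (forall s s', a <= s -> s <= s' -> s' <= b -> h s' <= h s) ->
  ex_RInt h a b.
Proof.
  intros Hab H01 Hmon.
  (* [h] is [1] before [c := sup {h = 1}] and [0] after it *)
  set (E := fun s => s = a \/ (a <= s <= b /\ h s = 1)).
  assert (Eb : bound E) by (exists b; intros s [->|[Hs _]]; lra).
  destruct (completeness E Eb (ex_intro _ a (or_introl eq_refl))) as [c [Hub Hlub]].
  assert (Hac : a <= c) by (apply Hub; left; reflexivity).
  assert (Hcb : c <= b) by (apply Hlub; intros s [->|[Hs _]]; lra).
  apply (ex_RInt_Chasles _ a c b).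
  - apply (ex_RInt_ext (fun _ => 1)); [|apply ex_RInt_const].
    intros s Hs. rewrite Rmin_left, Rmax_right in Hs by lra.
    assert (Hex : exists s', E s' /\ s < s').
    { apply NNPP; intro Hn. assert (c <= s); [|lra]. apply Hlub. intros s' Es'.
      apply Rnot_lt_le; intro; apply Hn; exists s'; auto. }
    destruct Hex as [s' [[->|[Hs' Hs'1]] Hss']]; [lra|].
    pose proof (Hmon s s' ltac:(lra) ltac:(lra) ltac:(lra)). destruct (H01 s); lra.
  - apply (ex_RInt_ext (fun _ => 0)); [|apply ex_RInt_const].
    intros s Hs. rewrite Rmin_left, Rmax_right in Hs by lra.
    destruct (H01 s ltac:(lra)) as [|H1]; [auto|].
    assert (s <= c) by (apply Hub; right; split; [lra|auto]). lra.
Qed.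

Lemma ex_RInt_sumn (F : nat -> R -> R) m a b :
  (forall k, (k < m)%nat -> ex_RInt (F k) a b) ->
  ex_RInt (fun s => sumn m (fun k => F k s)) a b.
Proof.
  induction m as [|m IH]; intros H; simpl.
  - apply (ex_RInt_const a b 0).
  - apply (ex_RInt_plus (fun s => sumn m (fun k => F k s)) (F m));
      [apply IH; intros|apply H]; auto with arith.
Qed.

(* The sum counts the integers in [[1, y]], i.e. it equals [floor y]. *)
Lemma count_below_le m y : 0 <= y <= INR m ->
  y - 1 < sumn m (fun k => if Rle_dec (INR (S k)) y then 1 else 0) <= y.
Proof.
  intros Hy.
  set (C := fun m => sumn m (fun k => if Rle_dec (INR (S k)) y then 1 else 0)).
  assert (Hinv : forall k, C k <= y /\ C k <= INR k /\ (C k = INR k \/ y - 1 < C k)).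
  { induction k as [|k IH]; [unfold C; simpl; lra|].
    change (C (S k)) with (C k + (if Rle_dec (INR (S k)) y then 1 else 0)).
    rewrite S_INR in *. destruct Rle_dec; lra. }
  destruct (Hinv m) as [H1 [_ [H2|H2]]]; fold (C m); lra.
Qed.

Lemma ex_RInt_noninc (f : R -> R) a b : a <= b ->
  (forall s s', a <= s -> s <= s' -> s' <= b -> f s' <= f s) -> ex_RInt f a b.
Proof.
  intros Hab Hmon.
  destruct (INR_archimed 1 (f a - f b) ltac:(lra)) as [M HM]. rewrite Rmult_1_r in HM.
  (* the staircase [f b + floor ((f - f b) (n + 1)) / (n + 1)] *)
  set (y := fun n s => (f s - f b) * INR (S n)).
  set (g := fun n s => f b + / INR (S n) *
         sumn (S n * M) (fun k => if Rle_dec (INR (S k)) (y n s) then 1 else 0)).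
  apply (ex_RInt_uniform_limit f g); [assumption|..].
  - intros n. apply (ex_RInt_plus (fun _ => f b) (fun s => / INR (S n) * _)).
    + apply ex_RInt_const.
    + apply (ex_RInt_scal (fun s => sumn _ _)), (ex_RInt_sumn (fun k s => _)).
      intros k _. apply ex_RInt_noninc_indicator; [assumption|..].
      * intros s _. destruct Rle_dec; auto.
      * intros s s' Hs Hss' Hs'. pose proof (Hmon s s' Hs Hss' Hs').
        assert (y n s' <= y n s) by (apply Rmult_le_compat_r; [apply pos_INR|lra]).
        do 2 destruct Rle_dec; lra.
  - intros n s Hs.
    assert (Hn : 0 < INR (S n)) by (apply lt_0_INR; lia).
    assert (Hfs : f b <= f s <= f a) by (split; apply Hmon; lra).
    destruct (count_below_le (S n * M) (y n s)) as [Hlo Hhi].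
    { unfold y. rewrite mult_INR. split; [apply Rmult_le_pos; lra|]. nra. }
    unfold g. apply Rabs_le. unfold y in *.
    set (C := sumn _ _) in *.
    split; apply (Rmult_le_reg_r (INR (S n))); try assumption;
      replace ((f b + / INR (S n) * C - f s) * INR (S n))
        with (C - (f s - f b) * INR (S n)) by (field; lra); field_simplify; lra.
Qed.

Lemma RInt_increment_le (f : R -> R) t0 t1 L a b :
  (forall s s', t0 <= s -> s <= s' -> s' <= t1 -> ex_RInt f s s') ->
  (forall s, t0 <= s <= t1 -> Rabs (f s) <= L) ->
  t0 <= a <= t1 -> t0 <= b <= t1 ->
  Rabs (RInt f t0 b - RInt f t0 a) <= L * Rabs (b - a).
Proof.
  intros Hint Hbound.
  assert (Hle : forall a b, t0 <= a <= t1 -> t0 <= b <= t1 -> a <= b ->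
            Rabs (RInt f t0 b - RInt f t0 a) <= L * Rabs (b - a)).
  { intros a' b' Ha Hb Hab.
    assert (Hchasles := RInt_Chasles f t0 a' b' ltac:(apply Hint; lra) ltac:(apply Hint; lra)).
    rewrite <- Hchasles. unfold plus; simpl.
    replace (RInt f t0 a' + RInt f a' b' - RInt f t0 a') with (RInt f a' b') by (simpl; lra).
    rewrite (Rabs_right (b' - a')), Rmult_comm by lra.
    apply abs_RInt_le_const; [assumption|apply Hint; lra|intros; apply Hbound; lra]. }
  intros Ha Hb. destruct (Rle_or_lt a b); [apply Hle; assumption|].
  rewrite Rabs_minus_sym, (Rabs_minus_sym b). apply Hle; lra.
Qed.

(** * Suprema, infima and the weight [phi] *)

Lemma Lub_Rbar_finite (E : R -> Prop) y0 B : E y0 -> (forall y, E y -> y <= B) ->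
  (forall y, E y -> y <= real (Lub_Rbar E)) /\ real (Lub_Rbar E) <= B.
Proof.
  intros H0 HB. destruct (Lub_Rbar_correct E) as [Hub Hl].
  specialize (Hl (Finite B) HB). pose proof (Hub y0 H0) as Hy0.
  destruct (Lub_Rbar E); simpl in *; try contradiction.
  split; [intros y Hy; exact (Hub y Hy)|exact Hl].
Qed.

Lemma Glb_Rbar_finite (E : R -> Prop) y0 L : E y0 -> (forall y, E y -> L <= y) ->
  (forall y, E y -> real (Glb_Rbar E) <= y) /\ L <= real (Glb_Rbar E).
Proof.
  intros H0 HL. destruct (Glb_Rbar_correct E) as [Hlb Hg].
  specialize (Hg (Finite L) HL). pose proof (Hlb y0 H0) as Hy0.
  destruct (Glb_Rbar E); simpl in *; try contradiction.
  split; [intros y Hy; exact (Hlb y Hy)|exact Hg].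
Qed.

Lemma supnorm_ge g : (exists M, forall r, Rabs (g r) <= M) -> forall r, Rabs (g r) <= supnorm g.
Proof.
  intros [M HM] r.
  refine (proj1 (Lub_Rbar_finite _ (Rabs (g r)) M _ _) _ _);
    [exists r; reflexivity|intros y [s ->]; apply HM|exists r; reflexivity].
Qed.

Section MaxOn0.

Variable f : R -> R.
Hypothesis f_bounded : forall t, 0 <= t -> exists B, forall s, 0 <= s <= t -> f s <= B.

Lemma max_on_0_ge t s : 0 <= s <= t -> f s <= max_on_0 f t.
Proof.
  intros Hs. destruct (f_bounded t ltac:(lra)) as [B HB].
  refine (proj1 (Lub_Rbar_finite _ (f s) B _ _) _ _);
    [exists s; auto|intros y [r [Hr ->]]; auto|exists s; auto].
Qed.

Lemma max_on_0_le_compat t t' : 0 <= t -> t <= t' -> max_on_0 f t <= max_on_0 f t'.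
Proof.
  intros Ht Htt.
  refine (proj2 (Lub_Rbar_finite _ (f 0) _ _ _));
    [exists 0; split; [lra|reflexivity]|intros y [r [Hr ->]]; apply max_on_0_ge; lra].
Qed.

End MaxOn0.

Section MinOn0.

Variable g : R -> R.
Hypothesis g_pos : forall r, 0 < g r.

Lemma min_on_0_le a r : 0 <= r <= a -> min_on_0 g a <= g r.
Proof.
  intros Hr.
  refine (proj1 (Glb_Rbar_finite _ (g r) 0 _ _) _ _);
    [exists r; auto|intros y [s [Hs ->]]; left; auto|exists r; auto].
Qed.

Lemma min_on_0_nonneg a : 0 <= a -> 0 <= min_on_0 g a.
Proof.
  intros Ha.
  refine (proj2 (Glb_Rbar_finite _ (g 0) 0 _ _));
    [exists 0; split; [lra|reflexivity]|intros y [s [Hs ->]]; left; auto].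
Qed.

Lemma min_on_0_le_compat a a' : 0 <= a -> a <= a' -> min_on_0 g a' <= min_on_0 g a.
Proof.
  intros Ha Haa.
  refine (proj2 (Glb_Rbar_finite _ (g 0) _ _ _));
    [exists 0; split; [lra|reflexivity]|intros y [s [Hs ->]]; apply min_on_0_le; lra].
Qed.

End MinOn0.

Lemma diam_ge N d z t i j : (i < N)%nat -> (j < N)%nat ->
  vnorm d (fun k => z i t k - z j t k) <= diam N d z t.
Proof.
  intros Hi Hj. unfold diam. eapply Rle_trans; [|apply (fmax_ge _ _ i Hi)].
  apply (fmax_ge _ (fun j => vnorm d (fun k => z i t k - z j t k)) j Hj).
Qed.

Lemma diam_le N d z t B : 0 <= B ->
  (forall i j, (i < N)%nat -> (j < N)%nat -> vnorm d (fun k => z i t k - z j t k) <= B) ->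
  diam N d z t <= B.
Proof.
  intros HB H. apply fmax_le; [assumption|]. intros i Hi.
  apply fmax_le; [assumption|]. intros j Hj. apply H; assumption.
Qed.

Section MinimalCoupling.

Variables (N d : nat) (x : nat -> R -> nat -> R).
Hypothesis x_cont : forall i k, (i < N)%nat -> (k < d)%nat -> cont_nonneg (fun s => x i s k).

Lemma continuity_pt_diam_clamp a b t : 0 <= a -> a <= b ->
  continuity_pt (fun s => diam N d x (clamp a b s)) t.
Proof.
  intros Ha Hab. apply (continuity_pt_fmax N (fun i s => fmax N _)). intros i Hi.
  apply (continuity_pt_fmax N (fun j s => vnorm d _)). intros j Hj.
  apply (continuity_pt_comp (fun s => sumn d _) sqrt).
  - apply (continuity_pt_sumn d (fun k s => _ ^ 2)). intros k Hk.
    apply (continuity_pt_ext (fun s => (x i (clamp a b s) k - x j (clamp a b s) k)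
                                      * (x i (clamp a b s) k - x j (clamp a b s) k))).
    { intros s; simpl; ring. }
    assert (Hdiff : continuity_pt (fun s => x i (clamp a b s) k - x j (clamp a b s) k) t).
    { apply (continuity_pt_minus (fun s => x i (clamp a b s) k) (fun s => x j (clamp a b s) k));
        apply (continuity_pt_clamp (fun s => x _ s k)); auto. }
    apply (continuity_pt_mult _ _ _ Hdiff Hdiff).
  - apply continuity_pt_sqrt, sumn_nonneg. intros; apply pow2_ge_0.
Qed.

Lemma diam_bounded t : 0 <= t -> exists B, forall s, 0 <= s <= t -> diam N d x s <= B.
Proof.
  intros Ht.
  destruct (continuity_ab_maj (fun s => diam N d x (clamp 0 t s)) 0 t Ht
              (fun c _ => continuity_pt_diam_clamp 0 t c (Rle_refl 0) Ht)) as [M [HM _]].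
  exists (diam N d x (clamp 0 t M)). intros s Hs.
  specialize (HM s Hs). rewrite clamp_id in HM; assumption.
Qed.

Variables (psi : R -> R) (K T : R).
Hypothesis psi_pos : forall r, 0 < psi r.
Hypothesis T_pos : 0 < T.

Lemma psi_t_le_coupling t i j : 0 <= t -> (i < N)%nat -> (j < N)%nat ->
  psi_t psi N d x t <= psi (vnorm d (fun l => x i t l - x j t l)).
Proof.
  intros Ht Hi Hj. apply min_on_0_le; [assumption|]. split; [apply sqrt_pos|].
  eapply Rle_trans; [apply (diam_ge N d x t i j Hi Hj)|].
  apply (max_on_0_ge _ diam_bounded); lra.
Qed.

Lemma psi_t_nonneg t : 0 <= t -> 0 <= psi_t psi N d x t.
Proof.
  intros Ht. apply min_on_0_nonneg; [assumption|].
  eapply Rle_trans; [apply fmax_nonneg|]. apply (max_on_0_ge _ diam_bounded t t); lra.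
Qed.

Lemma psi_t_noninc t t' : 0 <= t -> t <= t' -> psi_t psi N d x t' <= psi_t psi N d x t.
Proof.
  intros Ht Htt. apply min_on_0_le_compat; [assumption| |].
  - eapply Rle_trans; [apply fmax_nonneg|]. apply (max_on_0_ge _ diam_bounded t t); lra.
  - apply (max_on_0_le_compat _ diam_bounded); assumption.
Qed.

Notation phi_t := (phi psi K T N d x).

Lemma phi_nonneg t : 0 <= t -> 0 <= phi_t t.
Proof.
  intros Ht. apply Rmin_glb.
  - apply Rmult_le_pos; [left; apply exp_pos|apply psi_t_nonneg, Ht].
  - apply Rdiv_le_0_compat; [left; apply exp_pos|assumption].
Qed.

Lemma phi_le t : phi_t t <= exp (- K * T) / T.
Proof. apply Rmin_r. Qed.

Lemma exp_mul_phi_le_psi_t t : exp (K * T) * phi_t t <= psi_t psi N d x t.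
Proof.
  assert (Hc : exp (K * T) * exp (- K * T) = 1)
    by (rewrite <- exp_plus, <- exp_0; f_equal; ring).
  apply Rle_trans with (exp (K * T) * (exp (- K * T) * psi_t psi N d x t)).
  - apply Rmult_le_compat_l; [left; apply exp_pos|apply Rmin_l].
  - rewrite <- Rmult_assoc, Hc; lra.
Qed.

Lemma phi_noninc t t' : 0 <= t -> t <= t' -> phi_t t' <= phi_t t.
Proof.
  intros Ht Htt. unfold phi.
  assert (exp (- K * T) * psi_t psi N d x t' <= exp (- K * T) * psi_t psi N d x t)
    by (apply Rmult_le_compat_l; [left; apply exp_pos|apply psi_t_noninc; assumption]).
  unfold Rmin; repeat destruct Rle_dec; lra.
Qed.

Lemma ex_RInt_phi a b : 0 <= a -> a <= b -> ex_RInt phi_t a b.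
Proof. intros Ha Hab. apply ex_RInt_noninc; [assumption|]. intros; apply phi_noninc; lra. Qed.

Lemma RInt_phi_bounds t0 t1 : 0 <= t0 -> t0 <= t1 -> t1 - t0 <= T ->
  0 <= RInt phi_t t0 t1 /\ exp (K * T) * RInt phi_t t0 t1 <= 1.
Proof.
  intros Ht0 Ht01 HT. split.
  - apply RInt_ge_0; [assumption|apply ex_RInt_phi; assumption|].
    intros; apply phi_nonneg; lra.
  - assert (Habs := abs_RInt_le_const phi_t t0 t1 (exp (- K * T) / T) Ht01
                      (ex_RInt_phi t0 t1 Ht0 Ht01)).
    assert (HB : RInt phi_t t0 t1 <= T * (exp (- K * T) / T)).
    { eapply Rle_trans; [apply Rle_abs|]. eapply Rle_trans.
      - apply Habs. intros s Hs. rewrite Rabs_right by (apply Rle_ge, phi_nonneg; lra).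
        apply phi_le.
      - apply Rmult_le_compat_r; [apply Rdiv_le_0_compat; [left; apply exp_pos|]|]; lra. }
    replace (T * (exp (- K * T) / T)) with (exp (- K * T)) in HB by (field; lra).
    apply Rle_trans with (exp (K * T) * exp (- K * T)).
    + apply Rmult_le_compat_l; [left; apply exp_pos|assumption].
    + rewrite <- exp_plus, <- exp_0. right; f_equal; ring.
Qed.

End MinimalCoupling.

(** * Decay of the spread of a linear consensus system *)

Lemma coupling_sum_le (n i : nat) (w q : nat -> R) (lam K M : R) : (i <= n)%nat ->
  (forall k, (k <= n)%nat -> q k <= M /\ lam <= w k <= K) ->
  sumn (S n) (fun k => if Nat.eq_dec k i then 0 else w k * (q k - q i))
  <= lam * (sumn (S n) q - q i) + INR n * (K * (M - q i) - lam * M).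
Proof.
  intros Hi H. set (c := K * (M - q i) - lam * M).
  eapply Rle_trans.
  - apply (sumn_le _ _ (fun k => if Nat.eq_dec k i then 0 else lam * q k + c)).
    intros k Hk. destruct Nat.eq_dec; [lra|].
    destruct (H k ltac:(lia)) as [Hqk Hwk]. destruct (H i Hi) as [Hqi _].
    unfold c. nra.
  - rewrite sumn_skip by lia. rewrite sumn_plus, sumn_scal, sumn_const, S_INR. lra.
Qed.

(* For extremal [i], [j] the last term vanishes; in general it is absorbed over short
   time steps (see [spread_right_dini]). *)
Lemma drift_difference_le (n i j : nat) (a : nat -> nat -> R) (q : nat -> R) (lam K : R) :
  (1 <= n)%nat -> (i <= n)%nat -> (j <= n)%nat -> 0 <= lam ->
  (forall k l, (k <= n)%nat -> (l <= n)%nat -> lam <= a k l <= K) ->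
  / INR n * sumn (S n) (fun k => if Nat.eq_dec k i then 0 else a i k * (q k - q i))
  - / INR n * sumn (S n) (fun k => if Nat.eq_dec k j then 0 else a j k * (q k - q j))
  <= - lam * (max_upto n q - min_upto n q)
     + 2 * K * ((max_upto n q - min_upto n q) - (q i - q j)).
Proof.
  intros Hn Hi Hj Hlam Ha.
  set (M := max_upto n q). set (m := min_upto n q).
  set (A := sumn (S n) (fun k => if Nat.eq_dec k i then 0 else a i k * (q k - q i))).
  set (B := sumn (S n) (fun k => if Nat.eq_dec k j then 0 else a j k * (q k - q j))).
  assert (HA : A <= lam * (sumn (S n) q - q i) + INR n * (K * (M - q i) - lam * M)).
  { apply coupling_sum_le; [assumption|]. intros k Hk.
    split; [apply max_upto_ge, Hk|apply Ha; assumption]. }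
  (* the lower bound on [B] is the upper bound for [- q], whose maximum is [- m] *)
  assert (HB : - B <= lam * (- sumn (S n) q - - q j) + INR n * (K * (- m - - q j) - lam * - m)).
  { rewrite <- sumn_opp. unfold B. rewrite <- sumn_opp.
    rewrite (sumn_ext _ (fun k => - _)
      (fun k => if Nat.eq_dec k j then 0 else a j k * (- q k - - q j))) by
      (intros k _; destruct Nat.eq_dec; ring).
    apply (coupling_sum_le n j (a j) (fun k => - q k)); [assumption|]. intros k Hk.
    split; [pose proof (min_upto_le n q k Hk); unfold m; lra|apply Ha; assumption]. }
  set (D := M - m). set (e := D - (q i - q j)).
  assert (He : 0 <= e) by (unfold e, D, M, m; pose proof (max_upto_ge n q i Hi);
                           pose proof (min_upto_le n q j Hj); lra).
  assert (HD : 0 <= D) by (unfold D, M, m; pose proof (max_upto_ge n q i Hi);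
                           pose proof (min_upto_le n q i Hi); lra).
  assert (HAB : A - B <= lam * (e - D) + INR n * (K * e - lam * D)) by (unfold e, D; lra).
  assert (Hn1 : 1 <= INR n) by (apply (le_INR 1), Hn).
  set (w := / INR n).
  assert (Hw : w * INR n = 1) by (unfold w; field; lra).
  assert (Hw0 : 0 < w) by (apply Rinv_0_lt_compat; lra).
  assert (Hw1 : w <= 1) by (unfold w; rewrite <- Rinv_1; apply Rinv_le_contravar; lra).
  assert (HK : lam <= K) by (destruct (Ha i i Hi Hi); lra).
  assert (Hscaled : w * A - w * B <= w * lam * (e - D) + (K * e - lam * D)).
  { rewrite <- Rmult_minus_distr_l.
    replace (K * e - lam * D) with (w * INR n * (K * e - lam * D)) by (rewrite Hw; ring).
    replace (w * lam * (e - D) + w * INR n * (K * e - lam * D))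
      with (w * (lam * (e - D) + INR n * (K * e - lam * D))) by ring.
    apply Rmult_le_compat_l; lra. }
  assert (0 <= w * lam * D) by (apply Rmult_le_pos; [apply Rmult_le_pos|]; lra).
  assert (w * lam * e <= K * e) by (apply Rmult_le_compat_r; [lra|nra]).
  fold D. replace (D - (q i - q j)) with e by reflexivity. lra.
Qed.

Section SpreadDecay.

Variables (n : nat) (p : nat -> R -> R) (a : nat -> nat -> R -> R) (lam g G : R -> R).
Variables (K t0 t1 : R).
Hypothesis n_pos : (1 <= n)%nat.
Hypothesis K_pos : 0 < K.
Hypothesis p_cont : forall i t, (i <= n)%nat -> t0 <= t <= t1 -> continuity_pt (p i) t.
Hypothesis p_deriv : forall i t, (i <= n)%nat -> t0 < t < t1 ->
  derivable_pt_lim (p i) t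
    (/ INR n * sumn (S n) (fun j => if Nat.eq_dec j i then 0 else a i j t * (p j t - p i t))).
Hypothesis a_bounds : forall i j t, (i <= n)%nat -> (j <= n)%nat -> t0 < t < t1 ->
  lam t <= a i j t <= K.
Hypothesis g_bounds : forall t, t0 < t < t1 -> 0 <= g t <= lam t.
Hypothesis G_cont : forall t, t0 <= t <= t1 -> continuity_pt G t.
Hypothesis G_incr : forall t, t0 < t < t1 ->
  exists del, 0 < del /\ forall h, 0 < h < del -> G (t + h) <= G t + h * g t.

Definition spread (t : R) : R :=
  max_upto n (fun i => p i t) - min_upto n (fun i => p i t).

Lemma spread_nonneg t : 0 <= spread t.
Proof.
  unfold spread. pose proof (max_upto_ge n (fun i => p i t) 0 (Nat.le_0_l n)).
  pose proof (min_upto_le n (fun i => p i t) 0 (Nat.le_0_l n)). lra.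
Qed.

Lemma spread_right_dini t : t0 < t < t1 -> forall eps, 0 < eps ->
  exists del, 0 < del /\ forall h, 0 < h < del ->
    spread (t + h) <= spread t * (1 - h * lam t) + eps * h.
Proof.
  intros Ht eps He.
  set (dp := fun i => / INR n * sumn (S n)
               (fun j => if Nat.eq_dec j i then 0 else a i j t * (p j t - p i t))).
  destruct (right_nbhd_forall_le n
              (fun i h => Rabs (p i (t + h) - p i t - h * dp i) <= eps / 2 * h))
    as [d1 [Hd1 H1]].
  { intros i Hi. apply derivable_pt_lim_right; [apply p_deriv; assumption|lra]. }
  exists (Rmin d1 (/ (2 * K))). split; [apply Rmin_glb_lt; [|apply Rinv_0_lt_compat]; lra|].
  intros h Hh. pose proof (Rmin_l d1 (/ (2 * K))). pose proof (Rmin_r d1 (/ (2 * K))).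
  assert (HKh : 2 * K * h <= 1).
  { apply Rle_trans with (2 * K * / (2 * K)); [apply Rmult_le_compat_l; lra|].
    rewrite Rinv_r; lra. }
  (* compare the extremal agents at time [t + h] *)
  destruct (max_upto_attained n (fun k => p k (t + h))) as [i [Hi Ei]].
  destruct (min_upto_attained n (fun k => p k (t + h))) as [j [Hj Ej]].
  unfold spread. rewrite Ei, Ej.
  assert (Hpi := H1 i Hi h ltac:(lra)). assert (Hpj := H1 j Hj h ltac:(lra)).
  apply Rabs_le_between in Hpi. apply Rabs_le_between in Hpj.
  assert (Hdrift := drift_difference_le n i j (fun k l => a k l t) (fun k => p k t) (lam t) K
                      n_pos Hi Hj ltac:(destruct (g_bounds t Ht); lra)
                      ltac:(intros k l Hk Hl; apply a_bounds; assumption)).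
  change (dp i - dp j <= - lam t * spread t + 2 * K * (spread t - (p i t - p j t)))
    in Hdrift.
  change (p i (t + h) - p j (t + h) <= spread t * (1 - h * lam t) + eps * h).
  set (P := spread t) in *. set (e := P - (p i t - p j t)) in *.
  assert (He0 : 0 <= e).
  { unfold e, P, spread. pose proof (max_upto_ge n (fun k => p k t) i Hi).
    pose proof (min_upto_le n (fun k => p k t) j Hj). simpl in *. lra. }
  assert (h * (dp i - dp j) <= h * (- lam t * P + 2 * K * e))
    by (apply Rmult_le_compat_l; lra).
  assert (0 <= e * (1 - 2 * K * h)) by (apply Rmult_le_pos; lra).
  unfold e in *. nra.
Qed.

Lemma spread_exp_right_dini t : t0 < t < t1 -> forall eps, 0 < eps ->
  exists del, 0 < del /\ forall h, 0 < h < del ->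
    spread (t + h) * exp (G (t + h)) <= spread t * exp (G t) + eps * h.
Proof.
  intros Ht eps He. destruct (g_bounds t Ht) as [Hg0 Hglam].
  set (c := exp (G t) * exp (g t)).
  assert (Hc : 0 < c) by (apply Rmult_lt_0_compat; apply exp_pos).
  destruct (spread_right_dini t Ht (eps / c) ltac:(apply Rdiv_lt_0_compat; assumption))
    as [d1 [Hd1 H1]].
  destruct (G_incr t Ht) as [d2 [Hd2 H2]].
  exists (Rmin (Rmin d1 d2) 1). split; [repeat apply Rmin_glb_lt; lra|]. intros h Hh.
  pose proof (Rmin_l (Rmin d1 d2) 1). pose proof (Rmin_r (Rmin d1 d2) 1).
  pose proof (Rmin_l d1 d2). pose proof (Rmin_r d1 d2).
  specialize (H1 h ltac:(lra)). specialize (H2 h ltac:(lra)).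
  pose proof (spread_nonneg t) as HP. pose proof (spread_nonneg (t + h)) as HPh.
  set (E := exp (G t) * exp (h * g t)).
  assert (HE : 0 < E <= c).
  { split; [apply Rmult_lt_0_compat; apply exp_pos|].
    apply Rmult_le_compat_l; [left; apply exp_pos|apply exp_le_compat; nra]. }
  assert (Hgrowth : exp (G (t + h)) <= E).
  { unfold E. rewrite <- exp_plus. apply exp_le_compat; lra. }
  (* the factor [1 - h lam] is compensated by the growth [exp (h g)] since [g <= lam] *)
  assert (Hcomp : spread t * (1 - h * lam t) * exp (h * g t) <= spread t).
  { pose proof (one_minus_mul_exp_le (h * g t)). pose proof (exp_pos (h * g t)).
    assert (spread t * (1 - h * lam t) <= spread t * (1 - h * g t))
      by (apply Rmult_le_compat_l; [assumption|nra]).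
    nra. }
  assert (Hcomp' : spread t * (1 - h * lam t) * E <= spread t * exp (G t)).
  { unfold E. rewrite (Rmult_comm (exp (G t))), <- Rmult_assoc.
    apply Rmult_le_compat_r; [left; apply exp_pos|assumption]. }
  assert (Herr : eps / c * h * E <= eps * h).
  { apply Rle_trans with (eps / c * h * c); [|right; field; lra].
    apply Rmult_le_compat_l; [apply Rmult_le_pos; [apply Rlt_le, Rdiv_lt_0_compat|]|]; lra. }
  apply Rle_trans with (spread (t + h) * E); [apply Rmult_le_compat_l; assumption|].
  apply Rle_trans with ((spread t * (1 - h * lam t) + eps / c * h) * E);
    [apply Rmult_le_compat_r; lra|lra].
Qed.

Lemma spread_exp_noninc : t0 <= t1 -> spread t1 * exp (G t1) <= spread t0 * exp (G t0).
Proof.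
  intros Ht01. apply (dini_noninc (fun s => spread s * exp (G s))); [assumption| |].
  - intros t Ht.
    apply (continuity_pt_mult spread (fun s => exp (G s))).
    + apply (continuity_pt_minus (fun s => max_upto n (fun i => p i s))
                                 (fun s => min_upto n (fun i => p i s))).
      * apply (continuity_pt_max_upto n p). intros; apply p_cont; assumption.
      * apply (continuity_pt_min_upto n p). intros; apply p_cont; assumption.
    + apply (continuity_pt_comp G exp); [apply G_cont, Ht|].
      apply derivable_continuous_pt, derivable_pt_exp.
  - apply spread_exp_right_dini.
Qed.

End SpreadDecay.

(** * The cooperative phase of the Cucker-Smale system *)

Section CooperativePhase.

Variables (N d : nat) (psi : R -> R) (K T : R) (alpha : R -> R).
Variables (x v : nat -> R -> nat -> R) (t0 t1 : R).
Hypothesis N_ge2 : (2 <= N)%nat.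
Hypothesis psi_pos : forall r, 0 < psi r.
Hypothesis psi_le_K : forall r, psi r <= K.
Hypothesis exp_KT_ge2 : 2 <= exp (K * T).
Hypothesis t0_nonneg : 0 <= t0.
Hypothesis t0_lt_t1 : t0 < t1.
Hypothesis phase_le_T : t1 - t0 <= T.
Hypothesis alpha_one : forall t, t0 < t < t1 -> alpha t = 1.
Hypothesis x_cont : forall i k, (i < N)%nat -> (k < d)%nat -> cont_nonneg (fun s => x i s k).
Hypothesis v_cont : forall i k, (i < N)%nat -> (k < d)%nat -> cont_nonneg (fun s => v i s k).
Hypothesis v_deriv : forall t, t0 < t < t1 -> forall i k, (i < N)%nat -> (k < d)%nat ->
  is_derive (fun s => v i s k) t
    (/ INR (N - 1) *
     sumn N (fun j => if Nat.eq_dec j i then 0 else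
              alpha t * psi (vnorm d (fun l => x i t l - x j t l)) * (v j t k - v i t k))).

Let T_pos : 0 < T.
Proof. lra. Qed.

Notation phi_t := (phi psi K T N d x).

(* [v] frozen outside [t0, t1], so that it is continuous on the whole line *)
Definition projected_velocity (u : nat -> R) (i : nat) (s : R) : R :=
  sumn d (fun k => u k * v i (clamp t0 t1 s) k).

Lemma projected_velocity_continuous u i t : (i < N)%nat ->
  continuity_pt (projected_velocity u i) t.
Proof.
  intros Hi. apply (continuity_pt_sumn d (fun k s => u k * v i (clamp t0 t1 s) k)).
  intros k Hk. apply (continuity_pt_mult (fun _ => u k) (fun s => v i (clamp t0 t1 s) k)).
  - apply continuity_pt_const; intros ? ?; reflexivity.
  - apply (continuity_pt_clamp (fun s => v i s k)); [apply v_cont; assumption|lra|lra].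
Qed.

Lemma projected_velocity_derivative u i t : (i < N)%nat -> t0 < t < t1 ->
  derivable_pt_lim (projected_velocity u i) t
    (/ INR (N - 1) *
     sumn N (fun j => if Nat.eq_dec j i then 0 else
              alpha t * psi (vnorm d (fun l => x i t l - x j t l))
              * (projected_velocity u j t - projected_velocity u i t))).
Proof.
  intros Hi Ht.
  apply (derivable_pt_lim_locally_ext (fun s => sumn d (fun k => u k * v i s k)) _ t t0 t1);
    [assumption|intros s Hs; unfold projected_velocity; rewrite clamp_id; lra|].
  set (a := fun j => alpha t * psi (vnorm d (fun l => x i t l - x j t l))).
  set (w := fun k j => if Nat.eq_dec j i then 0 else a j * (v j t k - v i t k)).
  replace (/ INR (N - 1) * _)
    with (sumn d (fun k => u k * (/ INR (N - 1) * sumn N (w k)))).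
  - apply derivable_pt_lim_sumn. intros k Hk.
    apply derivable_pt_lim_scal, is_derive_Reals, v_deriv; assumption.
  - unfold projected_velocity. rewrite !clamp_id by lra.
    rewrite (sumn_ext _ _ (fun k => / INR (N - 1) * sumn N (fun j => u k * w k j)))
      by (intros k _; rewrite sumn_scal; ring).
    rewrite sumn_scal, sumn_swap. f_equal. apply sumn_ext. intros j _.
    unfold w. destruct Nat.eq_dec.
    + rewrite (sumn_ext _ _ (fun _ => 0)), sumn_const by (intros; ring). ring.
    + rewrite <- sumn_minus, <- sumn_scal. apply sumn_ext. intros; unfold a; ring.
Qed.

Definition phase_gain (s : R) : R := exp (K * T) * RInt phi_t t0 (clamp t0 t1 s).

Lemma phase_gain_continuous t : continuity_pt phase_gain t.
Proof.
  apply (continuity_pt_lipschitz _ _ (exp (K * T) * (exp (- K * T) / T))). intros y.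
  unfold phase_gain. rewrite <- Rmult_minus_distr_l, Rabs_mult, Rabs_right
    by (left; apply exp_pos).
  rewrite Rmult_assoc. apply Rmult_le_compat_l; [left; apply exp_pos|].
  eapply Rle_trans.
  - apply (RInt_increment_le phi_t t0 t1); try (apply clamp_in; lra).
    + intros s s' Hs Hss' _. apply ex_RInt_phi; auto; lra.
    + intros s Hs. rewrite Rabs_right by (apply Rle_ge, phi_nonneg; auto; lra).
      apply phi_le.
  - apply Rmult_le_compat_l; [apply Rdiv_le_0_compat; [left; apply exp_pos|lra]|].
    apply clamp_lip; lra.
Qed.

Lemma phase_gain_incr t : t0 < t < t1 -> exists del, 0 < del /\ forall h, 0 < h < del ->
  phase_gain (t + h) <= phase_gain t + h * (exp (K * T) * phi_t t).
Proof.
  intros Ht. exists (t1 - t). split; [lra|]. intros h Hh.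
  unfold phase_gain. rewrite !clamp_id by lra.
  rewrite <- (RInt_Chasles phi_t t0 t (t + h)) by (apply ex_RInt_phi; auto; lra).
  assert (RInt phi_t t (t + h) <= h * phi_t t).
  { apply Rle_trans with (RInt (fun _ => phi_t t) t (t + h)).
    - apply RInt_le; [lra|apply ex_RInt_phi; auto; lra|apply ex_RInt_const|].
      intros; apply phi_noninc; auto; lra.
    - rewrite RInt_const. right. unfold scal; simpl; unfold mult; simpl; ring. }
  unfold plus; simpl. pose proof (exp_pos (K * T)). nra.
Qed.

Let RInt_phi_phase_bounds : 0 <= RInt phi_t t0 t1 /\ exp (K * T) * RInt phi_t t0 t1 <= 1.
Proof. apply RInt_phi_bounds; auto; lra. Qed.

Lemma projected_spread_contraction u :
  spread (N - 1) (projected_velocity u) t1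
  <= (1 - RInt phi_t t0 t1) * spread (N - 1) (projected_velocity u) t0.
Proof.
  set (P := spread (N - 1) (projected_velocity u)). set (B := RInt phi_t t0 t1).
  destruct RInt_phi_phase_bounds as [HB0 HB1]. fold B in HB0, HB1.
  assert (Hdecay : P t1 * exp (phase_gain t1) <= P t0 * exp (phase_gain t0)).
  { apply (spread_exp_noninc (N - 1) (projected_velocity u)
             (fun i j t => alpha t * psi (vnorm d (fun l => x i t l - x j t l)))
             (psi_t psi N d x) (fun t => exp (K * T) * phi_t t) phase_gain K t0 t1).
    - lia.
    - pose proof (psi_pos 0). pose proof (psi_le_K 0). lra.
    - intros i t Hi _. apply projected_velocity_continuous; lia.
    - intros i t Hi Ht. replace (S (N - 1)) with N by lia.
      apply projected_velocity_derivative; [lia|assumption].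
    - intros i j t Hi Hj Ht. rewrite alpha_one, Rmult_1_l by assumption.
      split; [apply psi_t_le_coupling; auto; lra || lia|apply psi_le_K].
    - intros t Ht. split.
      + apply Rmult_le_pos; [left; apply exp_pos|apply phi_nonneg; auto; lra].
      + apply exp_mul_phi_le_psi_t.
    - intros t _. apply phase_gain_continuous.
    - apply phase_gain_incr.
    - lra. }
  unfold phase_gain in Hdecay.
  rewrite !clamp_id, RInt_point, Rmult_0_r, exp_0, Rmult_1_r in Hdecay by lra. fold B in Hdecay.
  pose proof (spread_nonneg (N - 1) (projected_velocity u) t0) as HP.
  replace (P t1) with (P t1 * exp (exp (K * T) * B) * exp (- (exp (K * T) * B)))
    by (rewrite Rmult_assoc, <- exp_plus, Rplus_opp_r, exp_0; ring).
  rewrite (Rmult_comm (1 - B)). apply Rle_trans with (P t0 * exp (- (exp (K * T) * B))).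
  - apply Rmult_le_compat_r; [left; apply exp_pos|assumption].
  - apply Rmult_le_compat_l; [assumption|apply exp_neg_mul_le; assumption].
Qed.

Lemma sqr_vnorm_le_projected_spread i j : (i < N)%nat -> (j < N)%nat ->
  vnorm d (fun k => v i t1 k - v j t1 k) * vnorm d (fun k => v i t1 k - v j t1 k)
  <= spread (N - 1) (projected_velocity (fun k => v i t1 k - v j t1 k)) t1.
Proof.
  intros Hi Hj. set (u := fun k => v i t1 k - v j t1 k). unfold spread.
  pose proof (max_upto_ge (N - 1) (fun k => projected_velocity u k t1) i ltac:(lia)).
  pose proof (min_upto_le (N - 1) (fun k => projected_velocity u k t1) j ltac:(lia)).
  assert (projected_velocity u i t1 - projected_velocity u j t1 = sumn d (fun k => u k ^ 2)).
  { unfold projected_velocity. rewrite clamp_id, <- sumn_minus by lra.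
    apply sumn_ext; intros; unfold u; ring. }
  rewrite vnorm_sqr. simpl in *. lra.
Qed.

Lemma projected_spread_le_diam u :
  spread (N - 1) (projected_velocity u) t0 <= vnorm d u * diam N d v t0.
Proof.
  unfold spread.
  destruct (max_upto_attained (N - 1) (fun k => projected_velocity u k t0)) as [i [Hi ->]].
  destruct (min_upto_attained (N - 1) (fun k => projected_velocity u k t0)) as [j [Hj ->]].
  unfold projected_velocity. rewrite clamp_id, <- sumn_minus by lra.
  apply Rle_trans with (vnorm d u * vnorm d (fun k => v i t0 k - v j t0 k)).
  - eapply Rle_trans; [|apply dot_le_vnorm]. right; apply sumn_ext; intros; ring.
  - apply Rmult_le_compat_l; [apply sqrt_pos|apply diam_ge; lia].
Qed.

Lemma pair_velocity_contraction i j : (i < N)%nat -> (j < N)%nat ->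
  vnorm d (fun k => v i t1 k - v j t1 k) <= (1 - RInt phi_t t0 t1) * diam N d v t0.
Proof.
  intros Hi Hj.
  pose proof (sqr_vnorm_le_projected_spread i j Hi Hj) as Hsq.
  set (u := fun k => v i t1 k - v j t1 k) in *.
  pose proof (projected_spread_contraction u) as Hcontr.
  pose proof (projected_spread_le_diam u) as Hinit.
  destruct RInt_phi_phase_bounds as [HB0 HB1].
  assert (HB : 0 <= 1 - RInt phi_t t0 t1) by nra.
  assert (HD : 0 <= diam N d v t0) by apply fmax_nonneg.
  set (nu := vnorm d u) in *. assert (Hnu : 0 <= nu) by apply sqrt_pos.
  destruct (Req_dec nu 0) as [->|Hnu0]; [apply Rmult_le_pos; assumption|].
  apply (Rmult_le_reg_l nu); [lra|]. nra.
Qed.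

Theorem diam_velocity_contraction : diam N d v t1 <= (1 - RInt phi_t t0 t1) * diam N d v t0.
Proof.
  destruct RInt_phi_phase_bounds as [HB0 HB1].
  apply diam_le; [apply Rmult_le_pos; [nra|apply fmax_nonneg]|].
  apply pair_velocity_contraction.
Qed.

End CooperativePhase.

Theorem proposition7p13
  (N d : nat) (psi : R -> R) (K : R) (tt : nat -> R) (T : R)
  (alpha : R -> R) (x v : nat -> R -> nat -> R) :
  (2 <= N)%nat ->
  (* hypotheses on tilde psi *)
  (forall r, 0 < psi r) ->
  (exists M, forall r, Rabs (psi r) <= M) ->
  (forall r, continuity_pt psi r) ->
  K = supnorm psi ->
  is_lim (fun X => RInt (fun y => min_on_0 psi y) 0 X) p_infty p_infty ->
  (* hypotheses on the switching times *)
  (forall n, tt n < tt (S n)) ->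
  tt 0%nat = 0 ->
  is_lim_seq tt p_infty ->
  (forall n, tt (2 * n + 2)%nat - tt (2 * n + 1)%nat < ln 2 / K) ->
  (forall n, tt (2 * n + 1)%nat - tt (2 * n)%nat > 1 / K) ->
  ex_series (fun p => ln (exp (K * (tt (2 * p + 2)%nat - tt (2 * p + 1)%nat))
                          / (2 - exp (K * (tt (2 * p + 2)%nat - tt (2 * p + 1)%nat))))) ->
  T > ln 2 / K ->
  (forall n, tt (2 * n + 1)%nat - tt (2 * n)%nat <= T) ->
  (* the switching signal alpha *)
  alpha 0 = 1 ->
  (forall n t, tt (2 * n)%nat < t < tt (2 * n + 1)%nat -> alpha t = 1) ->
  (forall n t, tt (2 * n + 1)%nat <= t <= tt (2 * n + 2)%nat -> alpha t = -1) ->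
  (* the solution: continuous on [0,oo), C^1 on each (t_n, t_{n+1}) *)
  (forall i k, (i < N)%nat -> (k < d)%nat -> cont_nonneg (fun s => x i s k)) ->
  (forall i k, (i < N)%nat -> (k < d)%nat -> cont_nonneg (fun s => v i s k)) ->
  (forall n t, tt n < t < tt (S n) -> forall i k, (i < N)%nat -> (k < d)%nat ->
     is_derive (fun s => x i s k) t (v i t k)) ->
  (forall n t, tt n < t < tt (S n) -> forall i k, (i < N)%nat -> (k < d)%nat ->
     is_derive (fun s => v i s k) t
       (/ INR (N - 1) *
        sumn N (fun j => if Nat.eq_dec j i then 0 else
                 alpha t * psi (vnorm d (fun l => x i t l - x j t l))
                   * (v j t k - v i t k)))) ->
  (* conclusion *)
  forall n : nat,
    diam N d v (tt (2 * n + 1)%nat)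
      <= (1 - RInt (phi psi K T N d x) (tt (2 * n)%nat) (tt (2 * n + 1)%nat))
         * diam N d v (tt (2 * n)%nat).
Proof.
  intros HN Hpos Hbdd _ HK _ Hinc H0 _ _ _ _ HT HTn _ Ha1 _ Hxc Hvc _ Hvd n.
  assert (HpsiK : forall r, psi r <= K).
  { intros r. pose proof (supnorm_ge psi Hbdd r) as Hsup.
    rewrite Rabs_right in Hsup by (left; apply Hpos). lra. }
  assert (HKpos : 0 < K) by (pose proof (Hpos 0); pose proof (HpsiK 0); lra).
  assert (Hnonneg : forall m, 0 <= tt m) by (induction m; [lra|pose proof (Hinc m); lra]).
  assert (Hstep : tt (2 * n)%nat < tt (2 * n + 1)%nat)
    by (replace (2 * n + 1)%nat with (S (2 * n)) by lia; apply Hinc).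
  apply (diam_velocity_contraction N d psi K T alpha x v); auto.
  - rewrite <- (exp_ln 2) by lra. apply exp_le_compat.
    apply (Rmult_lt_compat_l K) in HT; [|assumption].
    replace (K * (ln 2 / K)) with (ln 2) in HT by (field; lra). lra.
  - intros t Ht. apply (Ha1 n t Ht).
  - intros t Ht. replace (2 * n + 1)%nat with (S (2 * n)) in Ht by lia. apply (Hvd _ t Ht).
Qed.
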